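(* Let $\pi_0\in(0,1)$, $\sigma\in(0,0.25]$, and $\psi:[0,1]\to\mathbb{R}$ non-decreasing with $\psi(0)<\psi(1)$. For a strategy pair $(p_0,p_1)\in[0,1]^2$ define $\pi_S$, $\pi_C$, $\Phi_\theta(C,\sigma,\pi_0,p_0,p_1)$ and $\Phi_\theta(S,\sigma,\pi_0,p_0,p_1)$ as follows: $$\pi_S=\frac{(1-p_1)\pi_0}{(1-p_1)\pi_0+(1-p_0)(1-\pi_0)},\qquad \pi_C=\frac{p_1\pi_0}{p_1\pi_0+p_0(1-\pi_0)},$$ $$\Phi_\theta(C,\cdot)=0.5+2\sigma\theta+(0.5+2\sigma\theta)\psi\!\left(\tfrac{(1+4\sigma)\pi_C}{1+4\sigma\pi_C}\right)+(0.5-2\sigma\theta)\psi\!\left(\tfrac{(1-4\sigma)\pi_C}{1-4\sigma\pi_C}\right),\qquad \Phi_\theta(S,\cdot)=0.5+\psi(\pi_S).$$ A pair $(p_0,p_1)$ is an equilibrium if for each $\theta\in\{0,1\}$, $p_\theta$ maximizes $p\,\Phi_\theta(C,\sigma,\pi_0,p_0,p_1)+(1-p)\Phi_\theta(S,\sigma,\pi_0,p_0,p_1)$ over $p\in[0,1]$ (beliefs computed from $(p_0,p_1)$). If an equilibrium with $p_0,p_1\in\{0,1\}$ exists, then it is pooling, i.e. $p_0=p_1$.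
   Context: Setting: the expert knows his type $\theta\in\{0,1\}$ (competent iff $\theta=1$, prior $\pi_0$); the advisee does not. $p_\theta$ is the probability that type $\theta$ chooses the complex rule $C$ (take the action iff a condition holds, correct with probability $0.5+2\sigma\theta$) over the simple rule $S$ (take the action, correct with probability $0.5$). The advisee forms beliefs by Bayes' rule given the strategies; $\psi$ is the reputation payoff of the posterior that the expert is competent, added to the accuracy payoff. An equilibrium corresponds to a perfect Bayesian equilibrium with correct conjectures. *)

From mathcomp Require Import all_boot all_order all_algebra.
Set Implicit Arguments. Unset Strict Implicit. Unset Printing Implicit Defensive.
Import Order.TTheory GRing.Theory Num.Theory.
Local Open Scope ring_scope.

Section Model.
Variable R : realFieldType.

(* Bayesian posterior that the expert is competent after the simple rule S. *)
Definition piS (pi0 p0 p1 : R) : R :=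
  (1 - p1) * pi0 / ((1 - p1) * pi0 + (1 - p0) * (1 - pi0)).

(* Bayesian posterior that the expert is competent after the complex rule C. *)
Definition piC (pi0 p0 p1 : R) : R :=
  p1 * pi0 / (p1 * pi0 + p0 * (1 - pi0)).

(* type theta : bool (true = competent, theta = 1) *)
Definition PhiC (psi : R -> R) (theta : bool) (sigma pi0 p0 p1 : R) : R :=
  let t : R := (theta : nat)%:R in
  let pC := piC pi0 p0 p1 in
  2^-1 + 2 * sigma * t
  + (2^-1 + 2 * sigma * t) * psi ((1 + 4 * sigma) * pC / (1 + 4 * sigma * pC))
  + (2^-1 - 2 * sigma * t) * psi ((1 - 4 * sigma) * pC / (1 - 4 * sigma * pC)).

Definition PhiS (psi : R -> R) (theta : bool) (sigma pi0 p0 p1 : R) : R :=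
  2^-1 + psi (piS pi0 p0 p1).

Definition payoff (psi : R -> R) (theta : bool) (sigma pi0 p0 p1 p : R) : R :=
  p * PhiC psi theta sigma pi0 p0 p1 + (1 - p) * PhiS psi theta sigma pi0 p0 p1.

Definition strat (theta : bool) (p0 p1 : R) : R := if theta then p1 else p0.

Definition equilibrium (psi : R -> R) (sigma pi0 p0 p1 : R) : Prop :=
  [/\ 0 <= p0 <= 1, 0 <= p1 <= 1 &
   forall (theta : bool) (p : R), 0 <= p <= 1 ->
     payoff psi theta sigma pi0 p0 p1 p
       <= payoff psi theta sigma pi0 p0 p1 (strat theta p0 p1)].

End Model.

From mathcomp Require Import all_boot all_order all_algebra.
From mathcomp Require Import ring lra.
Set Implicit Arguments. Unset Strict Implicit.
Import Order.TTheory GRing.Theory Num.Theory.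
Local Open Scope ring_scope.

(** At a separating pure profile the posteriors are degenerate: the rule
    chosen by the competent type reveals competence (posterior 1) and the
    other rule reveals incompetence (posterior 0).  The incompetent type then
    strictly prefers to imitate the competent one: if the competent type plays
    C, imitating it earns [psi 1] on one of the two signals instead of [psi 0];
    if it plays S, imitating it earns [psi 1] instead of [psi 0] outright. *)

Section PureProfiles.

Variable R : realFieldType.
Variables (psi : R -> R) (sigma pi0 : R).

Lemma payoff1 theta p0 p1 :
  payoff psi theta sigma pi0 p0 p1 1 = PhiC psi theta sigma pi0 p0 p1.
Proof. by rewrite /payoff subrr mul0r addr0 mul1r. Qed.

Lemma payoff0 theta p0 p1 :
  payoff psi theta sigma pi0 p0 p1 0 = PhiS psi theta sigma pi0 p0 p1.
Proof. by rewrite /payoff subr0 mul0r add0r mul1r. Qed.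

Lemma equilibrium_PhiC_le theta p0 p1 :
  equilibrium psi sigma pi0 p0 p1 -> strat theta p0 p1 = 0 ->
  PhiC psi theta sigma pi0 p0 p1 <= PhiS psi theta sigma pi0 p0 p1.
Proof.
case=> _ _ best ps0; rewrite -payoff1 -payoff0 -ps0.
by apply: best; rewrite ler01 lexx.
Qed.

Lemma equilibrium_PhiS_le theta p0 p1 :
  equilibrium psi sigma pi0 p0 p1 -> strat theta p0 p1 = 1 ->
  PhiS psi theta sigma pi0 p0 p1 <= PhiC psi theta sigma pi0 p0 p1.
Proof.
case=> _ _ best ps1; rewrite -payoff1 -payoff0 -ps1.
by apply: best; rewrite ler01 lexx.
Qed.

Lemma PhiC_incompetent p0 p1 (pC := piC pi0 p0 p1) :
  PhiC psi false sigma pi0 p0 p1 =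
  2^-1 + (psi ((1 + 4 * sigma) * pC / (1 + 4 * sigma * pC))
          + psi ((1 - 4 * sigma) * pC / (1 - 4 * sigma * pC))) / 2.
Proof. by rewrite /PhiC /=; ring. Qed.

Lemma piS01 : piS pi0 0 1 = 0.
Proof. by rewrite /piS subrr !mul0r. Qed.

Lemma piC10 : piC pi0 1 0 = 0.
Proof. by rewrite /piC !mul0r. Qed.

Hypothesis pi0_neq0 : pi0 != 0.

Lemma piC01 : piC pi0 0 1 = 1.
Proof. by rewrite /piC mul0r addr0 mul1r divff. Qed.

Lemma piS10 : piS pi0 1 0 = 1.
Proof. by rewrite /piS subrr mul0r addr0 subr0 mul1r divff. Qed.

Hypothesis psi01 : psi 0 < psi 1.

(* [x / x] is [1], or [0] when [x = 0]. *)
Lemma psi0_le_divff (x : R) : psi 0 <= psi (x / x).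
Proof.
by have [->|x_neq0] := eqVneq x 0; rewrite ?mul0r // divff // ltW.
Qed.

Lemma not_equilibrium_competent_complex :
  0 < sigma -> ~ equilibrium psi sigma pi0 0 1.
Proof.
move=> sigma_gt0 /(equilibrium_PhiC_le (theta:=false)) /(_ erefl).
rewrite PhiC_incompetent /PhiS piS01 piC01 !mulr1 divff; last first.
  by rewrite gt_eqF // ltr_wpDr // mulr_ge0 // ltW.
(* The rewrites leave [psi] applied to [0] and [1] with unfolded structure
   instances, which [lra] would not match with those of [psi01]. *)
move: psi01 (psi0_le_divff (1 - 4 * sigma)).
by move: (psi 0) (psi 1) (psi (_ / _)) => a b c; lra.
Qed.

Lemma not_equilibrium_competent_simple : ~ equilibrium psi sigma pi0 1 0.
Proof.
move=> /(equilibrium_PhiS_le (theta:=false)) /(_ erefl).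
rewrite PhiC_incompetent /PhiS piS10 piC10 !mulr0 !mul0r.
by move: psi01; move: (psi 0) (psi 1) => a b; lra.
Qed.

End PureProfiles.

Theorem proposition7 (R : realFieldType) (pi0 sigma : R) (psi : R -> R) :
  0 < pi0 < 1 ->
  0 < sigma <= 4^-1 ->
  (forall x y : R, 0 <= x -> x <= y -> y <= 1 -> psi x <= psi y) ->
  psi 0 < psi 1 ->
  forall p0 p1 : R, (p0 = 0 \/ p0 = 1) -> (p1 = 0 \/ p1 = 1) ->
  equilibrium psi sigma pi0 p0 p1 -> p0 = p1.
Proof.
move=> /andP[pi0_gt0 _] /andP[sigma_gt0 _] _ psi01 p0 p1.
have pi0_neq0 : pi0 != 0 by rewrite gt_eqF.
case=> -> [] -> // equil.
- by case: (not_equilibrium_competent_complex pi0_neq0 psi01 sigma_gt0 equil).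
- by case: (not_equilibrium_competent_simple pi0_neq0 psi01 equil).
Qed.
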